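(* For all $0<x,y\le1$, $$\frac{|K_2(x,y)|}{x}\le\frac1{12}+\frac{x}{(36\sqrt3)\,y}+\frac1{2y^2}\Big|\sum_{m>1/y}\frac{\widetilde B_2\left(\frac{my}{x}\right)}{m^2}\Big|$$ (the sum over integers $m>1/y$), $$|K_2(x,y)|\le\Big(\frac14+\frac1{36\sqrt3}\Big)\frac{\min\{x,y\}}{\max\{x,y\}},$$ and $$\Big|K_2(x,x)-\frac1{12}\Big|\le\Big(\frac16+\frac1{36\sqrt3}\Big)x.$$
   Context: Let $K:[0,1]\times[0,1]\to\mathbb R$ be defined by $K(x,y)=\frac12-\{(xy)^{-1}\}$ if $0<x,y\le 1$, and $K(x,y)=0$ if $0\le x,y\le1$ and $xy=0$, where $\{\alpha\}=\alpha-\lfloor\alpha\rfloor$. Define $K_2(x,y)=\int_0^1K(x,z)K(z,y)\,dz$ for $0\le x,y\le1$. The periodic Bernoulli function is $\widetilde B_2(t)=\{t\}^2-\{t\}+\frac16$ for $t\in\mathbb R$. *)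

From Stdlib Require Import Reals.
From Coquelicot Require Import Coquelicot.
Open Scope R_scope.

(* {a} = a - floor a ; Stdlib's Int_part is the floor. *)
Definition frac (a : R) : R := a - IZR (Int_part a).

(* K(x,y) = 1/2 - {1/(xy)} if xy <> 0, and 0 if xy = 0
   (only values on [0,1]^2 matter). *)
Definition K (x y : R) : R :=
  if Req_EM_T (x * y) 0 then 0 else 1/2 - frac (/ (x * y)).

Definition K2 (x y : R) : R := RInt (fun z => K x z * K z y) 0 1.

Definition B2t (t : R) : R := (frac t)^2 - frac t + 1/6.

Definition tail_sum (x y : R) : R :=
  Series (fun m : nat =>
    if Rlt_dec (/ y) (INR m) then B2t (INR m * y / x) / (INR m)^2 else 0).

From Stdlib Require Import Reals Lra Lia Psatz.
From Coquelicot Require Import Coquelicot.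
Open Scope R_scope.

(* Write [A(z) = (x/2) B~_2(1/(xz))].  Since [B~_2] is continuous with derivative
   [2 B~_1], one has [d/dz (z^2 A) = K(x,z) + 2 z A] across the jumps of [{1/(xz)}].
   On [[d, 1]] with [d = 1/(N y)], [K(z,y) = 1/2 - 1/(zy) + sum_(m<=N) [z <= 1/(my)]],
   so integrating by parts leaves boundary terms in [A(1)] and [A(d)], the terms
   [x/(2y^2) B~_2(my/x)/m^2] from the jump points [z = 1/(my) < 1] (i.e. [m > 1/y]),
   [-(1/y) int A], which is [O(x^2)] because [B~_2] is in turn the derivative of
   [B~_3/3] with [|B_3| <= 1/(12 sqrt 3)], and [int 2 z A ({1/(zy)} - 1/2) = O(x)].
   The piece [[0, d]] costs at most [d/4] and disappears as [N] grows.  On the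
   diagonal [K(x,z)^2 = B~_2(1/(xz)) + 1/12]. *)

(** * Real arithmetic and integration *)

Lemma le_Rinv_iff (a u : R) : 0 < u -> a <= / u <-> a * u <= 1.
Proof.
  intros Hu. split; intros H.
  - apply (Rmult_le_compat_r u) in H; [| lra]. rewrite Rinv_l in H; lra.
  - replace a with (a * u * / u) by (field; lra).
    rewrite <- (Rmult_1_l (/ u)) at 2.
    apply Rmult_le_compat_r; [left; apply Rinv_0_lt_compat |]; lra.
Qed.

Lemma Rinv_mul_le_iff (x a b : R) : 0 < x -> 0 < a -> 0 < b ->
  / (x * a) <= / (x * b) <-> b <= a.
Proof.
  intros Hx Ha Hb. split; intros H.
  - destruct (Rle_lt_dec b a) as [h | h]; [exact h |].
    assert (/ (x * b) < / (x * a)) by (apply Rinv_lt_contravar; [apply Rmult_lt_0_compat |]; nra).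
    lra.
  - apply Rinv_le_contravar; nra.
Qed.

Lemma Rinv_mul_lt_iff (x a b : R) : 0 < x -> 0 < a -> 0 < b ->
  / (x * a) < / (x * b) <-> b < a.
Proof.
  intros Hx Ha Hb. pose proof (Rinv_mul_le_iff x b a Hx Hb Ha). split; intros H'.
  - destruct (Rle_lt_dec a b) as [h | h]; [apply H in h; lra | exact h].
  - destruct (Rle_lt_dec (/ (x * b)) (/ (x * a))) as [h | h]; [apply H in h; lra | exact h].
Qed.

Lemma Rdiv_le_cross (a b c d : R) : 0 < b -> 0 < d -> a * d <= c * b -> a / b <= c / d.
Proof.
  intros Hb Hd H. replace (a / b) with (a * d * / (b * d)) by (field; lra).
  replace (c / d) with (c * b * / (b * d)) by (field; lra).
  apply Rmult_le_compat_r; [left; apply Rinv_0_lt_compat; nra | exact H].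
Qed.

Lemma eventually_INR_gt (r : R) : eventually (fun N : nat => r < INR N).
Proof. apply is_lim_seq_INR. exists r. tauto. Qed.

Lemma is_RInt_zero (a b : R) : is_RInt (fun _ => 0) a b 0.
Proof.
  pose proof (is_RInt_const a b 0) as H. unfold scal in H; simpl in H; unfold mult in H; simpl in H.
  rewrite Rmult_0_r in H. exact H.
Qed.

Lemma is_RInt_add_scal (f g : R -> R) (a b u v c : R) :
  is_RInt f a b u -> is_RInt g a b v -> is_RInt (fun z => f z + c * g z) a b (u + c * v).
Proof. intros Hf Hg. exact (is_RInt_plus _ _ _ _ _ _ Hf (is_RInt_scal _ _ _ c _ Hg)). Qed.

Lemma is_RInt_id_scal (c a b : R) : is_RInt (fun z => c * z) a b (c * (b^2 - a^2) / 2).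
Proof.
  replace (c * (b^2 - a^2) / 2) with (minus (c * b^2 / 2) (c * a^2 / 2))
    by (unfold minus, plus, opp; simpl; field).
  apply (is_RInt_derive (fun z => c * z^2 / 2)).
  - intros z _. auto_derive; [exact I | field].
  - intros z _. apply (@ex_derive_continuous R_AbsRing R_NormedModule). auto_derive. exact I.
Qed.

Lemma is_RInt_sum_n_m (h : nat -> R -> R) (v : nat -> R) (a b : R) (n m : nat) :
  (forall k, (n <= k <= m)%nat -> is_RInt (h k) a b (v k)) ->
  is_RInt (fun z => sum_n_m (fun k => h k z) n m) a b (sum_n_m v n m).
Proof.
  induction m as [| m IH]; intros H.
  - destruct n as [| n].
    + rewrite sum_n_n. apply (is_RInt_ext (h 0%nat)); [intros; rewrite sum_n_n; reflexivity |].
      apply H. lia.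
    + rewrite sum_n_m_zero by lia. apply (is_RInt_ext (fun _ => 0)); [| apply is_RInt_zero].
      intros. rewrite sum_n_m_zero by lia. reflexivity.
  - destruct (Nat.le_gt_cases n (S m)) as [Hn | Hn].
    + pose proof (is_RInt_add_scal _ _ _ _ _ _ 1 (IH (fun k Hk => H k ltac:(lia)))
                    (H (S m) ltac:(lia))) as Hs.
      rewrite sum_n_Sm by exact Hn.
      replace (plus _ _) with (sum_n_m v n m + 1 * v (S m)) by (unfold plus; simpl; ring).
      refine (is_RInt_ext _ _ _ _ _ _ Hs). intros z _.
      rewrite sum_n_Sm by exact Hn. unfold plus; simpl. ring.
    + rewrite sum_n_m_zero by lia. apply (is_RInt_ext (fun _ => 0)); [| apply is_RInt_zero].
      intros. rewrite sum_n_m_zero by lia. reflexivity.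
Qed.

Lemma is_RInt_extend_zero (g h : R -> R) (a b c l : R) : a <= c <= b -> is_RInt g a c l ->
  (forall z, a < z < c -> h z = g z) -> (forall z, c < z < b -> h z = 0) -> is_RInt h a b l.
Proof.
  intros Hc Hg Hac Hcb.
  assert (H1 : is_RInt h a c l).
  { apply is_RInt_ext with g; [| exact Hg]. rewrite Rmin_left, Rmax_right by lra.
    intros z Hz. symmetry. auto. }
  assert (H2 : is_RInt h c b 0).
  { apply is_RInt_ext with (fun _ => 0); [| apply is_RInt_zero].
    rewrite Rmin_left, Rmax_right by lra. intros z Hz. symmetry. auto. }
  pose proof (is_RInt_Chasles _ _ _ _ _ _ H1 H2) as H. unfold plus in H; simpl in H.
  rewrite Rplus_0_r in H. exact H.
Qed.

Lemma IsStepFun_ext_interior (f g : R -> R) (a b : R) (Hf : IsStepFun f a b) : a <= b ->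
  (forall t, a < t < b -> f t = g t) ->
  {Hg : IsStepFun g a b | RiemannInt_SF (mkStepFun Hg) = RiemannInt_SF (mkStepFun Hf)}.
Proof.
  intros Hab E. destruct Hf as [l [lf Hc]].
  assert (Hc' : adapted_couple g a b l lf).
  { destruct Hc as [Hord [H0 [Hl [Hlen Hcst]]]].
    repeat split; auto. intros i Hi t Ht. rewrite <- E; [exact (Hcst i Hi t Ht) |].
    rewrite Rmin_left in H0 by lra. rewrite Rmax_right in Hl by lra.
    destruct (RList.RList_P6 l) as [Hmono _]. specialize (Hmono Hord).
    assert (RList.pos_Rl l 0 <= RList.pos_Rl l i) by (apply Hmono; lia).
    assert (RList.pos_Rl l (S i) <= RList.pos_Rl l (Init.Nat.pred (length l)))
      by (apply Hmono; lia).
    unfold open_interval in Ht. lra. }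
  exists (existT _ l (existT _ lf Hc')). reflexivity.
Qed.

(* Near [a] the approximating step functions are taken to be [0 +/- B]. *)
Lemma ex_RInt_bounded_left (f : R -> R) (a b B : R) : a < b -> 0 < B ->
  (forall t, a <= t <= b -> Rabs (f t) <= B) ->
  (forall d, a < d <= b -> ex_RInt f d b) -> ex_RInt f a b.
Proof.
  intros Hab HB Hbound Hint. apply ex_RInt_Reals_1. intros eps.
  pose proof (cond_pos eps) as Heps.
  set (d := a + Rmin (b - a) (eps / (4 * B))).
  assert (Hd : a < d <= b).
  { unfold d. split; [| pose proof (Rmin_l (b - a) (eps / (4 * B))); lra].
    assert (0 < Rmin (b - a) (eps / (4 * B)))
      by (apply Rmin_pos; [lra | apply Rdiv_lt_0_compat; lra]).
    lra. }
  assert (HdB : B * (d - a) <= eps / 4).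
  { unfold d. replace (a + _ - a) with (Rmin (b - a) (eps / (4 * B))) by ring.
    apply Rle_trans with (B * (eps / (4 * B))).
    - apply Rmult_le_compat_l; [lra | apply Rmin_r].
    - right. field. lra. }
  assert (He2 : 0 < eps / 2) by lra.
  destruct (ex_RInt_Reals_0 _ _ _ (Hint d Hd) (mkposreal _ He2)) as [phi2 [psi2 [Happrox Hsmall]]].
  set (phi := fun t => if Rle_dec t d then 0 else phi2 t).
  set (psi := fun t => if Rle_dec t d then B else psi2 t).
  destruct (IsStepFun_ext_interior (fct_cte 0) phi a d (StepFun_P4 a d 0)) as [Pa _]; [lra | |].
  { intros t Ht. unfold phi, fct_cte. destruct (Rle_dec t d); [reflexivity | lra]. }
  destruct (IsStepFun_ext_interior phi2 phi d b (pre phi2)) as [Pb _]; [lra | |].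
  { intros t Ht. unfold phi. destruct (Rle_dec t d); [lra | reflexivity]. }
  destruct (IsStepFun_ext_interior (fct_cte B) psi a d (StepFun_P4 a d B)) as [Qa EQa]; [lra | |].
  { intros t Ht. unfold psi, fct_cte. destruct (Rle_dec t d); [reflexivity | lra]. }
  destruct (IsStepFun_ext_interior psi2 psi d b (pre psi2)) as [Qb EQb]; [lra | |].
  { intros t Ht. unfold psi. destruct (Rle_dec t d); [lra | reflexivity]. }
  exists (mkStepFun (StepFun_P46 Pa Pb)), (mkStepFun (StepFun_P46 Qa Qb)). split.
  - intros t Ht. simpl. unfold phi, psi. rewrite Rmin_left, Rmax_right in Ht by lra.
    destruct (Rle_dec t d).
    + rewrite Rminus_0_r. apply Hbound. lra.
    + apply Happrox. rewrite Rmin_left, Rmax_right by lra. lra.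
  - simpl. rewrite <- (StepFun_P43 Qa Qb), EQa, StepFun_P18.
    replace (RiemannInt_SF {| fe := psi; pre := Qb |}) with (RiemannInt_SF psi2)
      by (rewrite EQb; destruct psi2; reflexivity).
    simpl in Hsmall. pose proof (Rabs_triang (B * (d - a)) (RiemannInt_SF psi2)).
    rewrite (Rabs_pos_eq (B * (d - a))) in * by (apply Rmult_le_pos; lra). lra.
Qed.

(** * Fractional parts *)

Lemma frac_range (t : R) : 0 <= frac t < 1.
Proof. pose proof (base_fp t) as H. unfold frac_part in H. unfold frac. lra. Qed.

Lemma frac_eq (k : Z) (t : R) : IZR k <= t < IZR k + 1 -> frac t = t - IZR k.
Proof. intros Ht. unfold frac. rewrite <- (Int_part_spec t k); [reflexivity | lra]. Qed.

Lemma frac_periodic_eval (h : R -> R) (k : Z) (t : R) :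
  h 0 = h 1 -> IZR k <= t <= IZR k + 1 -> h (frac t) = h (t - IZR k).
Proof.
  intros Hh [Hk Hk1]. destruct (Rle_lt_or_eq_dec _ _ Hk1) as [Hlt | ->].
  - rewrite (frac_eq k); [reflexivity | lra].
  - rewrite (frac_eq (k + 1)); rewrite plus_IZR; [| lra].
    replace (IZR k + 1 - (IZR k + 1)) with 0 by ring.
    replace (IZR k + 1 - IZR k) with 1 by ring. exact Hh.
Qed.

Lemma sum_indicators_full (t : R) (N : nat) : INR N <= t ->
  sum_n_m (fun m => if Rle_dec (INR m) t then 1 else 0) 1 N = INR N.
Proof.
  intros HN. rewrite (sum_n_m_ext_loc _ (fun _ => 1)).
  - rewrite sum_n_m_const, Rmult_1_r. f_equal. lia.
  - intros m Hm. destruct (Rle_dec (INR m) t) as [h | h]; [reflexivity |].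
    exfalso. apply h. apply Rle_trans with (INR N); [apply le_INR; lia | exact HN].
Qed.

Lemma Int_part_sum_indicators (t : R) (N : nat) : 0 <= t < INR N + 1 ->
  IZR (Int_part t) = sum_n_m (fun m => if Rle_dec (INR m) t then 1 else 0) 1 N.
Proof.
  induction N as [| N IH]; intros Ht.
  - rewrite sum_n_m_zero by lia. rewrite <- (Int_part_spec t 0); simpl in *; [reflexivity | lra].
  - rewrite sum_n_Sm by lia. rewrite S_INR in Ht.
    destruct (Rle_dec (INR (S N)) t) as [h | h]; rewrite S_INR in h.
    + rewrite sum_indicators_full by lra. rewrite <- (Int_part_spec t (Z.of_nat (S N))).
      * rewrite <- INR_IZR_INZ, S_INR. unfold plus; simpl. ring.
      * rewrite <- INR_IZR_INZ, S_INR. lra.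
    + rewrite <- IH by lra. unfold plus; simpl. ring.
Qed.

Section FracInv.

Variable x : R.
Hypothesis Hx : 0 < x.

Lemma inv_floor_induction (Rp : R -> R -> Prop) :
  (forall a b c, 0 < a <= b -> b <= c -> Rp a b -> Rp b c -> Rp a c) ->
  (forall (k : Z) a b, 0 < a <= b -> IZR k <= / (x * b) -> / (x * a) <= IZR k + 1 -> Rp a b) ->
  forall a b, 0 < a <= b -> Rp a b.
Proof.
  intros Htrans Hpiece.
  assert (Hind : forall n a b, 0 < a <= b ->
            / (x * a) < IZR (Int_part (/ (x * b))) + INR n + 1 -> Rp a b).
  (* [n] bounds the number of integers that [1/(x z)] crosses on [[a, b]]; the crossing
     nearest to [b] is at [c = 1/(x (k+1))]. *)
  { induction n as [| n IH]; intros a b Hab Ha;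
      set (k := Int_part (/ (x * b))) in Ha;
      destruct (base_Int_part (/ (x * b))) as [Hk Hk1]; fold k in Hk, Hk1;
      destruct (Rle_lt_dec (/ (x * a)) (IZR k + 1)) as [Hle | Hgt];
      try (apply (Hpiece k); lra).
    - simpl in Ha. lra.
    - assert (Hb : 0 < / (x * b)) by (apply Rinv_0_lt_compat; nra).
      set (c := / (x * (IZR k + 1))).
      assert (Hc0 : 0 < c) by (apply Rinv_0_lt_compat; nra).
      assert (Hc : / (x * c) = IZR k + 1) by (unfold c; field; lra).
      assert (Hac : a < c) by (apply (Rinv_mul_lt_iff x); lra).
      assert (Hcb : c <= b) by (apply (Rinv_mul_le_iff x); lra).
      apply (Htrans a c b); [lra | lra | | apply (Hpiece k); lra].
      apply IH; [lra |]. rewrite Hc, <- (Int_part_spec (IZR k + 1) (k + 1)), plus_IZR.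
      + rewrite S_INR in Ha. lra.
      + rewrite plus_IZR. lra. }
  intros a b Hab. destruct (eventually_INR_gt (/ (x * a) - IZR (Int_part (/ (x * b))))) as [n Hn].
  apply (Hind n); [exact Hab |]. specialize (Hn n (le_n n)). lra.
Qed.

Lemma frac_inv_on_piece (k : Z) (a b z : R) : 0 < a <= b ->
  IZR k <= / (x * b) -> / (x * a) <= IZR k + 1 -> a < z <= b ->
  frac (/ (x * z)) = / (x * z) - IZR k.
Proof.
  intros Hab Hkb Hka Hz. apply frac_eq. split.
  - apply Rle_trans with (/ (x * b)); [exact Hkb | apply (Rinv_mul_le_iff x); lra].
  - apply Rlt_le_trans with (/ (x * a)); [apply (Rinv_mul_lt_iff x); lra | exact Hka].
Qed.

Variables Phi phi : R -> R -> R.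
Hypothesis Hcont : forall (k z : R), 0 < z -> continuous (fun w => phi w (/ (x * w) - k)) z.

Lemma ex_RInt_frac_inv (a b : R) : 0 < a <= b -> ex_RInt (fun z => phi z (frac (/ (x * z)))) a b.
Proof.
  apply (inv_floor_induction (fun a b => ex_RInt (fun z => phi z (frac (/ (x * z)))) a b)).
  - intros a' b' c' _ _ H1 H2. exact (ex_RInt_Chasles _ _ _ _ H1 H2).
  - intros k a' b' Hab Hkb Hka.
    apply ex_RInt_ext with (fun z => phi z (/ (x * z) - IZR k)).
    + rewrite Rmin_left, Rmax_right by lra. intros z Hz.
      rewrite (frac_inv_on_piece k a' b'); [reflexivity | lra ..].
    + apply (@ex_RInt_continuous R_CompleteNormedModule).
      rewrite Rmin_left, Rmax_right by lra. intros z Hz. apply Hcont. lra.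
Qed.

Hypothesis Hderiv : forall (k z : R), 0 < z ->
  is_derive (fun w => Phi w (/ (x * w) - k)) z (phi z (/ (x * z) - k)).
Hypothesis Hperiodic : forall z, Phi z 0 = Phi z 1.

Lemma is_RInt_frac_inv (a b : R) : 0 < a <= b ->
  is_RInt (fun z => phi z (frac (/ (x * z)))) a b
    (Phi b (frac (/ (x * b))) - Phi a (frac (/ (x * a)))).
Proof.
  apply (inv_floor_induction (fun a b => is_RInt (fun z => phi z (frac (/ (x * z)))) a b
           (Phi b (frac (/ (x * b))) - Phi a (frac (/ (x * a)))))).
  - intros a' b' c' _ _ H1 H2. replace (Phi c' _ - Phi a' _) with
      (plus (Phi b' (frac (/ (x * b'))) - Phi a' (frac (/ (x * a'))))
            (Phi c' (frac (/ (x * c'))) - Phi b' (frac (/ (x * b')))))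
      by (unfold plus; simpl; ring).
    exact (is_RInt_Chasles _ _ _ _ _ _ H1 H2).
  - intros k a' b' Hab Hkb Hka.
    assert (Hin : forall z, a' <= z <= b' -> IZR k <= / (x * z) <= IZR k + 1).
    { intros z Hz. split.
      - apply Rle_trans with (/ (x * b')); [exact Hkb | apply (Rinv_mul_le_iff x); lra].
      - apply Rle_trans with (/ (x * a')); [apply (Rinv_mul_le_iff x); lra | exact Hka]. }
    rewrite (frac_periodic_eval (Phi b') k), (frac_periodic_eval (Phi a') k);
      [| auto | apply Hin; lra | auto | apply Hin; lra].
    apply is_RInt_ext with (fun z => phi z (/ (x * z) - IZR k)).
    + rewrite Rmin_left, Rmax_right by lra. intros z Hz.
      rewrite (frac_inv_on_piece k a' b'); [reflexivity | lra ..].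
    + apply (is_RInt_derive (fun w => Phi w (/ (x * w) - IZR k)));
        rewrite Rmin_left, Rmax_right by lra; intros z Hz; [apply Hderiv | apply Hcont]; lra.
Qed.

End FracInv.

(** * Bernoulli polynomials *)

Definition bern2 (t : R) : R := t^2 - t + 1/6.

Definition bern3 (t : R) : R := t^3 - 3/2 * t^2 + 1/2 * t.

Definition bern3_sup : R := / (12 * sqrt 3).

Lemma bern2_bound (t : R) : 0 <= t <= 1 -> Rabs (bern2 t) <= 1/6.
Proof. intros Ht. unfold bern2. apply Rabs_le. split; nra. Qed.

Lemma one_lt_sqrt3 : 1 < sqrt 3.
Proof. rewrite <- sqrt_1. apply sqrt_lt_1; lra. Qed.

Lemma bern3_sup_pos : 0 < bern3_sup.
Proof. pose proof one_lt_sqrt3. unfold bern3_sup. apply Rinv_0_lt_compat. lra. Qed.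

Lemma bern3_sup_div3 : bern3_sup / 3 = / (36 * sqrt 3).
Proof. pose proof one_lt_sqrt3. unfold bern3_sup. field. lra. Qed.

Lemma bern3_bound (t : R) : 0 <= t <= 1 -> Rabs (bern3 t) <= bern3_sup.
Proof.
  intros Ht. rewrite <- (Rabs_pos_eq bern3_sup) by (left; exact bern3_sup_pos).
  apply Rsqr_le_abs_0.
  assert (Hsup : Rsqr bern3_sup = 1/432).
  { unfold bern3_sup, Rsqr. pose proof one_lt_sqrt3. rewrite <- Rinv_mult.
    replace (12 * sqrt 3 * (12 * sqrt 3)) with (144 * (sqrt 3 * sqrt 3)) by ring.
    rewrite sqrt_sqrt by lra. field. }
  rewrite Hsup. unfold Rsqr, bern3. set (s := t - 1/2).
  replace t with (s + 1/2) by (unfold s; ring).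
  (* 1/432 - bern3 t ^ 2 = (s^2 - 1/12)^2 (1/3 - s^2), and s^2 <= 1/4 *)
  assert (s * s <= 1/4) by (unfold s; nra).
  assert (0 <= (s * s - 1/12)^2 * (1/3 - s * s)) by (apply Rmult_le_pos; [apply pow2_ge_0 | lra]).
  nra.
Qed.

(** * The kernel *)

Lemma K_pos (x z : R) : 0 < x -> 0 < z -> K x z = 1/2 - frac (/ (x * z)).
Proof. intros Hx Hz. unfold K. destruct (Req_EM_T (x * z) 0); [nra | reflexivity]. Qed.

Lemma K_sym (a b : R) : K a b = K b a.
Proof. unfold K. rewrite (Rmult_comm a b). reflexivity. Qed.

Lemma K_bound (a b : R) : Rabs (K a b) <= 1/2.
Proof.
  unfold K. destruct (Req_EM_T _ _); [rewrite Rabs_R0; lra |].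
  pose proof (frac_range (/ (a * b))). apply Rabs_le. lra.
Qed.

Lemma KK_bound (a b c : R) : Rabs (K a b * K b c) <= 1/4.
Proof.
  rewrite Rabs_mult. pose proof (K_bound a b). pose proof (K_bound b c).
  pose proof (Rabs_pos (K a b)). pose proof (Rabs_pos (K b c)). nra.
Qed.

(* The [A(z)] of the sketch above: [d/dz kernA x z = K(x,z)/z^2] between the jumps of
   [{1/(xz)}], and [kernA x] is continuous across them because [bern2 0 = bern2 1]. *)
Definition kernA (x z : R) : R := x / 2 * bern2 (frac (/ (x * z))).

Lemma kernA_bound (x z : R) : 0 < x -> Rabs (kernA x z) <= x / 12.
Proof.
  intros Hx. unfold kernA. rewrite Rabs_mult, Rabs_right by lra.
  pose proof (frac_range (/ (x * z))) as Hf.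
  pose proof (bern2_bound _ (conj (proj1 Hf) (Rlt_le _ _ (proj2 Hf)))). nra.
Qed.

Ltac continuity_by_derive :=
  intros; apply (@ex_derive_continuous R_AbsRing R_NormedModule);
  unfold bern2, bern3; auto_derive; repeat split; nra.

Section KernelPrimitives.

Variable x : R.
Hypothesis Hx : 0 < x.

Lemma is_RInt_K_kernA (a b : R) : 0 < a <= b ->
  is_RInt (fun z => K x z + 2 * z * kernA x z) a b (b^2 * kernA x b - a^2 * kernA x a).
Proof.
  intros Hab. apply is_RInt_ext
    with (fun z => (1/2 - frac (/ (x * z))) + 2 * z * (x/2 * bern2 (frac (/ (x * z))))).
  { rewrite Rmin_left, Rmax_right by lra. intros z Hz. rewrite K_pos by lra. reflexivity. }
  apply (is_RInt_frac_inv x Hx (fun z t => z^2 * (x/2 * bern2 t))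
           (fun z t => (1/2 - t) + 2 * z * (x/2 * bern2 t)));
    [continuity_by_derive | | | exact Hab].
  - intros k z Hz. unfold bern2. auto_derive; [repeat split; nra | field; lra].
  - intros z. unfold bern2. ring.
Qed.

Lemma is_RInt_K_kernA_lin (y a b : R) : 0 < y -> 0 < a <= b ->
  is_RInt (fun z => K x z * (1/2 - / (z * y)) + kernA x z * (z - / y)) a b
    (kernA x b * (b^2/2 - b / y) - kernA x a * (a^2/2 - a / y)).
Proof.
  intros Hy Hab.
  apply is_RInt_ext with (fun z => (1/2 - frac (/ (x * z))) * (1/2 - / (z * y))
                                   + x/2 * bern2 (frac (/ (x * z))) * (z - / y)).
  { rewrite Rmin_left, Rmax_right by lra. intros z Hz. rewrite K_pos by lra. reflexivity. }
  apply (is_RInt_frac_inv x Hx (fun z t => x/2 * bern2 t * (z^2/2 - z / y))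
           (fun z t => (1/2 - t) * (1/2 - / (z * y)) + x/2 * bern2 t * (z - / y)));
    [continuity_by_derive | | | exact Hab].
  - intros k z Hz. unfold bern2. auto_derive; [repeat split; nra | field; lra].
  - intros z. unfold bern2. ring.
Qed.

Lemma is_RInt_bern2_bern3 (a b : R) : 0 < a <= b ->
  is_RInt (fun z => bern2 (frac (/ (x * z))) - 2 * x / 3 * (z * bern3 (frac (/ (x * z))))) a b
    (x / 3 * (a^2 * bern3 (frac (/ (x * a))) - b^2 * bern3 (frac (/ (x * b))))).
Proof.
  intros Hab.
  replace (x / 3 * _) with (- (x/3) * b^2 * bern3 (frac (/ (x * b)))
                            - - (x/3) * a^2 * bern3 (frac (/ (x * a)))) by ring.
  apply (is_RInt_frac_inv x Hx (fun z t => - (x/3) * z^2 * bern3 t)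
           (fun z t => bern2 t - 2 * x / 3 * (z * bern3 t)));
    [continuity_by_derive | | | exact Hab].
  - intros k z Hz. unfold bern2, bern3. auto_derive; [repeat split; nra | field; lra].
  - intros z. unfold bern3. field.
Qed.

Lemma ex_RInt_kernA (a b : R) : 0 < a <= b -> ex_RInt (kernA x) a b.
Proof. apply (ex_RInt_frac_inv x Hx (fun z t => x/2 * bern2 t)). continuity_by_derive. Qed.

Lemma ex_RInt_id_kernA (a b : R) : 0 < a <= b -> ex_RInt (fun z => z * kernA x z) a b.
Proof. apply (ex_RInt_frac_inv x Hx (fun z t => z * (x/2 * bern2 t))). continuity_by_derive. Qed.

Lemma ex_RInt_id_bern3 (a b : R) : 0 < a <= b ->
  ex_RInt (fun z => z * bern3 (frac (/ (x * z)))) a b.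
Proof. apply (ex_RInt_frac_inv x Hx (fun z t => z * bern3 t)). continuity_by_derive. Qed.

End KernelPrimitives.

Lemma RInt_bern2_frac_inv (x d : R) : 0 < x -> 0 < d <= 1 ->
  ex_RInt (fun z => bern2 (frac (/ (x * z)))) d 1
  /\ Rabs (RInt (fun z => bern2 (frac (/ (x * z)))) d 1) <= 2 * x * bern3_sup / 3.
Proof.
  intros Hx Hd.
  set (W := RInt (fun z => z * bern3 (frac (/ (x * z)))) d 1).
  assert (HW : is_RInt (fun z => z * bern3 (frac (/ (x * z)))) d 1 W)
    by exact (RInt_correct _ _ _ (ex_RInt_id_bern3 x Hx d 1 Hd)).
  assert (Hq : forall z, Rabs (bern3 (frac (/ (x * z)))) <= bern3_sup).
  { intros z. pose proof (frac_range (/ (x * z))). apply bern3_bound. lra. }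
  assert (HWb : Rabs W <= bern3_sup * (1^2 - d^2) / 2).
  { change (norm W <= bern3_sup * (1^2 - d^2) / 2).
    apply (norm_RInt_le (fun z => z * bern3 (frac (/ (x * z)))) (fun z => bern3_sup * z) d 1);
      [lra | | exact HW | apply is_RInt_id_scal].
    intros z Hz. change (Rabs (z * bern3 (frac (/ (x * z)))) <= bern3_sup * z).
    rewrite Rabs_mult, Rabs_pos_eq by lra. rewrite Rmult_comm.
    apply Rmult_le_compat_r; [lra | apply Hq]. }
  pose proof (is_RInt_add_scal _ _ _ _ _ _ (2 * x / 3) (is_RInt_bern2_bern3 x Hx d 1 Hd) HW) as H.
  assert (HP : is_RInt (fun z => bern2 (frac (/ (x * z)))) d 1
                 (x / 3 * (d^2 * bern3 (frac (/ (x * d))) - 1^2 * bern3 (frac (/ (x * 1))))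
                  + 2 * x / 3 * W)).
  { refine (is_RInt_ext _ _ _ _ _ _ H). intros z _. simpl. ring. }
  split; [eexists; exact HP |]. rewrite (is_RInt_unique _ _ _ _ HP).
  assert (Hbdry : Rabs (d^2 * bern3 (frac (/ (x * d))) - 1^2 * bern3 (frac (/ (x * 1))))
                  <= (d^2 + 1) * bern3_sup).
  { unfold Rminus. eapply Rle_trans; [apply Rabs_triang |].
    rewrite Rabs_Ropp, !Rabs_mult, (Rabs_pos_eq (d^2)), (Rabs_pos_eq (1^2)) by nra.
    pose proof (Hq d). pose proof (Hq 1). nra. }
  eapply Rle_trans; [apply Rabs_triang |].
  rewrite !Rabs_mult, (Rabs_pos_eq (x / 3)), (Rabs_pos_eq (2 * x / 3)) by lra.
  pose proof (Rabs_pos W). nra.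
Qed.

Lemma RInt_kernA (x d : R) : 0 < x -> 0 < d <= 1 ->
  Rabs (RInt (kernA x) d 1) <= x^2 * bern3_sup / 3.
Proof.
  intros Hx Hd. destruct (RInt_bern2_frac_inv x d Hx Hd) as [Hex Hb].
  replace (RInt (kernA x) d 1) with (x / 2 * RInt (fun z => bern2 (frac (/ (x * z)))) d 1)
    by (symmetry; exact (RInt_scal (fun z => bern2 (frac (/ (x * z)))) d 1 (x/2) Hex)).
  rewrite Rabs_mult, Rabs_pos_eq by lra. nra.
Qed.

(** * Cutting the integral at 1/(Ny) *)

(* On [[cutoff y N, 1]] one has [1/(zy) <= N], so [floor (1/(zy))] is the sum of the
   indicators of [z <= 1/(my)], [1 <= m <= N]. *)
Definition cutoff (y : R) (N : nat) : R := / (INR N * y).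

Lemma cutoff_range (y : R) (N : nat) : 0 < y -> 1 <= INR N * y -> 0 < cutoff y N <= 1.
Proof.
  intros Hy HN. unfold cutoff. split; [apply Rinv_0_lt_compat; lra |].
  rewrite <- Rinv_1. apply Rinv_le_contravar; lra.
Qed.

Lemma eventually_cutoff_le (y eps : R) : 0 < y -> 0 < eps ->
  eventually (fun N => 1 <= INR N * y /\ cutoff y N <= eps).
Proof.
  intros Hy Heps. destruct (eventually_INR_gt (Rmax (/ y) (/ (eps * y)))) as [N0 HN0].
  exists N0. intros N HN. specialize (HN0 N HN).
  pose proof (Rmax_l (/ y) (/ (eps * y))). pose proof (Rmax_r (/ y) (/ (eps * y))).
  assert (Hy' : / y < INR N) by lra. assert (Hey' : / (eps * y) < INR N) by lra.
  apply (Rmult_lt_compat_r y) in Hy'; [| lra]. rewrite Rinv_l in Hy' by lra.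
  apply (Rmult_lt_compat_r (eps * y)) in Hey'; [| nra]. rewrite Rinv_l in Hey' by nra.
  split; [lra |]. unfold cutoff.
  assert (Hw : / (INR N * y) * (INR N * y) = 1) by (apply Rinv_l; lra).
  assert (0 < / (INR N * y)) by (apply Rinv_0_lt_compat; lra). nra.
Qed.

Section FloorDecomposition.

Variables (y : R) (N : nat).
Hypotheses (Hy : 0 < y) (HN : 1 <= INR N * y).

Lemma Int_part_inv_as_sum (z : R) : cutoff y N <= z ->
  IZR (Int_part (/ (z * y))) = sum_n_m (fun m => if Rle_dec z (/ (INR m * y)) then 1 else 0) 1 N.
Proof.
  intros Hz. pose proof (cutoff_range y N Hy HN) as Hd. unfold cutoff in *.
  rewrite (Int_part_sum_indicators _ N).
  - apply sum_n_m_ext_loc. intros m Hm.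
    assert (Hm0 : 0 < INR m) by (apply lt_0_INR; lia).
    assert (Hiff : INR m <= / (z * y) <-> z <= / (INR m * y)).
    { rewrite !le_Rinv_iff by nra. split; intros; nra. }
    destruct (Rle_dec (INR m) _), (Rle_dec z _); tauto.
  - split; [left; apply Rinv_0_lt_compat; nra |].
    assert (Hzy : 1 <= INR N * y * z).
    { apply (Rmult_le_compat_l (INR N * y)) in Hz; [| lra]. rewrite Rinv_r in Hz; lra. }
    assert (Hw : / (z * y) * (z * y) = 1) by (apply Rinv_l; nra).
    assert (0 < / (z * y)) by (apply Rinv_0_lt_compat; nra).
    assert (/ (z * y) <= INR N); [nra | lra].
Qed.

Lemma is_RInt_Int_part_inv_mul (g G : R -> R) :
  (forall c, cutoff y N <= c <= 1 -> is_RInt g (cutoff y N) c (G c - G (cutoff y N))) ->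
  is_RInt (fun z => IZR (Int_part (/ (z * y))) * g z) (cutoff y N) 1
    (sum_n_m (fun m => G (Rmin 1 (/ (INR m * y))) - G (cutoff y N)) 1 N).
Proof.
  intros HG. pose proof (cutoff_range y N Hy HN) as Hd.
  apply is_RInt_ext with
    (fun z => sum_n_m (fun m => (if Rle_dec z (/ (INR m * y)) then 1 else 0) * g z) 1 N).
  { rewrite Rmin_left, Rmax_right by lra. intros z Hz.
    rewrite Int_part_inv_as_sum by lra.
    exact (sum_n_m_mult_r (K := R_Ring) (g z)
             (fun m => if Rle_dec z (/ (INR m * y)) then 1 else 0) 1 N). }
  apply is_RInt_sum_n_m. intros m Hm.
  assert (Hm0 : 1 <= INR m) by (apply (le_INR 1); lia).
  assert (Hbm : cutoff y N <= / (INR m * y)).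
  { unfold cutoff. apply Rinv_le_contravar; [nra |].
    apply Rmult_le_compat_r; [lra | apply le_INR; lia]. }
  apply (is_RInt_extend_zero g _ _ _ (Rmin 1 (/ (INR m * y)))).
  - split; [apply Rmin_glb; lra | apply Rmin_l].
  - apply HG. split; [apply Rmin_glb; lra | apply Rmin_l].
  - intros z Hz. destruct (Rle_dec z _) as [h | h]; [ring |].
    exfalso. apply h. pose proof (Rmin_r 1 (/ (INR m * y))). lra.
  - intros z Hz. destruct (Rle_dec z _) as [h | h]; [| ring].
    exfalso. destruct (Rle_dec 1 (/ (INR m * y))).
    + rewrite Rmin_left in Hz; lra.
    + rewrite Rmin_right in Hz; lra.
Qed.

End FloorDecomposition.

Definition tail_term (x y : R) (m : nat) : R :=
  if Rlt_dec (/ y) (INR m) then B2t (INR m * y / x) / (INR m)^2 else 0.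

Lemma tail_term_0 (x y : R) : 0 < y -> tail_term x y 0 = 0.
Proof.
  intros Hy. unfold tail_term. destruct (Rlt_dec _ _) as [h | h]; [| reflexivity].
  simpl in h. pose proof (Rinv_0_lt_compat y Hy). lra.
Qed.

Lemma cutoff_step_term (x y : R) (m : nat) : 0 < x -> 0 < y -> (1 <= m)%nat ->
  (Rmin 1 (/ (INR m * y)))^2 * kernA x (Rmin 1 (/ (INR m * y)))
  = (if Rle_dec (INR m) (/ y) then 1 else 0) * kernA x 1 + x / (2 * y^2) * tail_term x y m.
Proof.
  intros Hx Hy Hm. assert (Hm1 : 1 <= INR m) by (apply (le_INR 1); exact Hm).
  unfold tail_term. destruct (Rle_dec (INR m) (/ y)) as [h | h].
  - destruct (Rlt_dec (/ y) (INR m)) as [h' | h']; [lra |].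
    rewrite Rmin_left; [ring |].
    rewrite le_Rinv_iff by nra. apply le_Rinv_iff in h; [nra | lra].
  - destruct (Rlt_dec (/ y) (INR m)) as [h' | h']; [| lra].
    assert (Hmy : 1 < INR m * y).
    { apply (Rmult_lt_compat_r y) in h'; [| lra]. rewrite Rinv_l in h'; lra. }
    rewrite Rmin_right.
    + unfold kernA, B2t. replace (/ (x * / (INR m * y))) with (INR m * y / x) by (field; lra).
      unfold bern2. field. lra.
    + left. rewrite <- Rinv_1. apply Rinv_lt_contravar; lra.
Qed.

Section CutoffIntegral.

Variables (x y : R) (N : nat).
Hypotheses (Hx : 0 < x) (Hy : 0 < y) (HN : 1 <= INR N * y).

Lemma sum_cutoff_steps :
  sum_n_m (fun m => (Rmin 1 (/ (INR m * y)))^2 * kernA x (Rmin 1 (/ (INR m * y)))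
                    - (cutoff y N)^2 * kernA x (cutoff y N)) 1 N
  = IZR (Int_part (/ y)) * kernA x 1 + x / (2 * y^2) * sum_n (tail_term x y) N
    - INR N * ((cutoff y N)^2 * kernA x (cutoff y N)).
Proof.
  rewrite (sum_n_m_ext_loc _
    (fun m => plus (mult (if Rle_dec (INR m) (/ y) then 1 else 0) (kernA x 1))
                   (plus (mult (x / (2 * y^2)) (tail_term x y m))
                         (- ((cutoff y N)^2 * kernA x (cutoff y N)))))).
  2:{ intros m Hm. rewrite cutoff_step_term by (auto; lia). unfold plus, mult; simpl. ring. }
  rewrite !sum_n_m_plus, sum_n_m_mult_r, sum_n_m_mult_l, sum_n_m_const.
  rewrite <- Int_part_sum_indicators.
  2:{ split; [left; apply Rinv_0_lt_compat; lra |].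
      assert (Hiy : / y * y = 1) by (apply Rinv_l; lra).
      assert (0 < / y) by (apply Rinv_0_lt_compat; lra).
      assert (/ y <= INR N); [nra | lra]. }
  unfold sum_n. rewrite (sum_Sn_m _ 0 N) by lia. rewrite tail_term_0 by exact Hy.
  replace (S N - 1)%nat with N by lia. unfold plus, mult, zero; simpl.
  change (@sum_n_m (Ring.AbelianMonoid R_Ring)) with (@sum_n_m R_AbelianMonoid). ring.
Qed.

Definition kernH (z : R) : R := 2 * z * kernA x z * (frac (/ (z * y)) - 1/2).

Lemma ex_RInt_kernH : ex_RInt kernH (cutoff y N) 1.
Proof.
  pose proof (cutoff_range y N Hy HN) as Hd.
  set (g := fun z => 2 * (z * kernA x z)).
  assert (Hg : forall c, cutoff y N <= c <= 1 -> ex_RInt g (cutoff y N) c).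
  { intros c Hc. apply (ex_RInt_scal (fun z => z * kernA x z)). apply ex_RInt_id_kernA; lra. }
  assert (Hfl : is_RInt (fun z => IZR (Int_part (/ (z * y))) * g z) (cutoff y N) 1
      (sum_n_m (fun m => RInt g (cutoff y N) (Rmin 1 (/ (INR m * y)))
                         - RInt g (cutoff y N) (cutoff y N)) 1 N)).
  { apply is_RInt_Int_part_inv_mul; [exact Hy | exact HN |]. intros c Hc.
    replace (RInt g _ c - _) with (RInt g (cutoff y N) c)
      by (rewrite RInt_point; unfold zero; simpl; symmetry; apply Rminus_0_r).
    exact (@RInt_correct R_CompleteNormedModule _ _ _ (Hg c Hc)). }
  pose proof (RInt_correct _ _ _ (ex_RInt_kernA x Hx _ _ Hd)) as HA.
  pose proof (RInt_correct _ _ _ (ex_RInt_id_kernA x Hx _ _ Hd)) as HzA.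
  (* [kernH z = (2/y) A(z) - z A(z) - floor (1/(zy)) 2 z A(z)] *)
  eexists. refine (is_RInt_ext _ _ _ _ _ _ (is_RInt_add_scal _ _ _ _ _ _ (-1)
    (is_RInt_add_scal _ _ _ _ _ _ (-1) (is_RInt_scal _ _ _ (2 / y) _ HA) HzA) Hfl)).
  rewrite Rmin_left, Rmax_right by lra. intros z Hz.
  unfold kernH, g, frac, scal; simpl; unfold mult; simpl. field. split; lra.
Qed.

Lemma is_RInt_KK_cutoff :
  is_RInt (fun z => K x z * K z y) (cutoff y N) 1
    (kernA x 1 * (1/2 - frac (/ y)) - (cutoff y N)^2 / 2 * kernA x (cutoff y N)
     + x / (2 * y^2) * sum_n (tail_term x y) N
     - / y * RInt (kernA x) (cutoff y N) 1 + RInt kernH (cutoff y N) 1).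
Proof.
  pose proof (cutoff_range y N Hy HN) as Hd. set (d := cutoff y N) in *.
  assert (HNd : INR N * d^2 = d / y) by (unfold d, cutoff; field; split; nra).
  pose proof (is_RInt_K_kernA_lin x Hx y d 1 Hy Hd) as HF2.
  assert (HF1 := is_RInt_Int_part_inv_mul y N Hy HN (fun z => K x z + 2 * z * kernA x z)
                  (fun c => c^2 * kernA x c)
                  (fun c Hc => is_RInt_K_kernA x Hx d c (conj (proj1 Hd) (proj1 Hc)))).
  cbv beta in HF1. rewrite sum_cutoff_steps in HF1. fold d in HF1.
  pose proof (RInt_correct _ _ _ (ex_RInt_kernA x Hx d 1 Hd)) as HA.
  pose proof (RInt_correct _ _ _ ex_RInt_kernH) as HH.
  pose proof (is_RInt_add_scal _ _ _ _ _ _ 1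
    (is_RInt_add_scal _ _ _ _ _ _ (- / y) (is_RInt_add_scal _ _ _ _ _ _ 1 HF2 HF1) HA) HH) as H.
  (* [K(x,z) K(z,y) = K(x,z) (1/2 - 1/(zy)) + A(z) (z - 1/y)
                       + floor (1/(zy)) (K(x,z) + 2 z A(z)) - A(z)/y + kernH z] *)
  match type of H with is_RInt _ _ _ ?v => replace (kernA x 1 * _ - _ + _ - _ + _) with v end.
  - refine (is_RInt_ext _ _ _ _ _ _ H). rewrite Rmin_left, Rmax_right by lra. intros z Hz.
    match goal with |- ?a = ?b => change (@eq R a b) end.
    rewrite (K_pos z y) by lra. unfold kernH, frac. field. split; lra.
  - fold d. unfold frac.
    replace (d^2 / 2 * kernA x d) with (kernA x d * (d^2 / 2 - d / y) + INR N * (d^2 * kernA x d))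
      by (rewrite <- Rmult_assoc, HNd; field; lra).
    field. lra.
Qed.

Lemma RInt_KK_cutoff_bound :
  Rabs (RInt (fun z => K x z * K z y) (cutoff y N) 1)
  <= x / 12 + x * (cutoff y N)^2 / 24 + x / (2 * y^2) * Rabs (sum_n (tail_term x y) N)
     + x^2 * bern3_sup / (3 * y).
Proof.
  pose proof (cutoff_range y N Hy HN) as Hd.
  rewrite (is_RInt_unique _ _ _ _ is_RInt_KK_cutoff). set (d := cutoff y N) in *.
  pose proof (kernA_bound x 1 Hx) as HA1. pose proof (kernA_bound x d Hx) as HAd.
  pose proof (frac_range (/ y)) as Hfr.
  assert (E1 : Rabs (kernA x 1 * (1/2 - frac (/ y))) <= x / 24).
  { rewrite Rabs_mult. assert (Rabs (1/2 - frac (/ y)) <= 1/2) by (apply Rabs_le; lra).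
    pose proof (Rabs_pos (kernA x 1)). pose proof (Rabs_pos (1/2 - frac (/ y))). nra. }
  assert (E2 : Rabs (d^2 / 2 * kernA x d) <= x * d^2 / 24).
  { rewrite Rabs_mult, Rabs_pos_eq by nra. nra. }
  assert (E3 : Rabs (x / (2 * y^2) * sum_n (tail_term x y) N)
               <= x / (2 * y^2) * Rabs (sum_n (tail_term x y) N)).
  { rewrite Rabs_mult, Rabs_pos_eq; [lra | apply Rlt_le, Rdiv_lt_0_compat; nra]. }
  assert (E4 : Rabs (/ y * RInt (kernA x) d 1) <= x^2 * bern3_sup / (3 * y)).
  { rewrite Rabs_mult, Rabs_pos_eq by (left; apply Rinv_0_lt_compat; lra).
    replace (x^2 * bern3_sup / (3 * y)) with (/ y * (x^2 * bern3_sup / 3)) by (field; lra).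
    apply Rmult_le_compat_l; [left; apply Rinv_0_lt_compat; lra | exact (RInt_kernA x d Hx Hd)]. }
  assert (E5 : Rabs (RInt kernH d 1) <= x / 24).
  { apply Rle_trans with (x / 12 * (1^2 - d^2) / 2); [| nra].
    change (norm (RInt kernH d 1) <= x / 12 * (1^2 - d^2) / 2).
    apply (norm_RInt_le kernH (fun z => x / 12 * z) d 1);
      [lra | | exact (RInt_correct _ _ _ ex_RInt_kernH) | apply is_RInt_id_scal].
    intros z Hz. change (Rabs (kernH z) <= x / 12 * z). unfold kernH.
    pose proof (kernA_bound x z Hx). pose proof (frac_range (/ (z * y))).
    assert (Rabs (frac (/ (z * y)) - 1/2) <= 1/2) by (apply Rabs_le; lra).
    rewrite !Rabs_mult, (Rabs_pos_eq 2), (Rabs_pos_eq z) by lra.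
    pose proof (Rabs_pos (kernA x z)). pose proof (Rabs_pos (frac (/ (z * y)) - 1/2)).
    assert (Rabs (kernA x z) * Rabs (frac (/ (z * y)) - 1/2) <= x / 24) by nra. nra. }
  apply Rabs_le_between in E1, E2, E3, E4, E5. apply Rabs_le. lra.
Qed.

End CutoffIntegral.

Lemma ex_RInt_KK (x y : R) : 0 < x -> 0 < y -> ex_RInt (fun z => K x z * K z y) 0 1.
Proof.
  intros Hx Hy. apply (ex_RInt_bounded_left _ 0 1 (1/4)); [lra | lra | intros; apply KK_bound |].
  intros d Hd. destruct (eventually_cutoff_le y d Hy (proj1 Hd)) as [N HN].
  destruct (HN N (le_n N)) as [HNy Hcut].
  pose proof (cutoff_range y N Hy HNy) as Hc.
  apply (ex_RInt_Chasles_2 (V := R_CompleteNormedModule) _ (cutoff y N)); [lra |].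
  eexists. exact (is_RInt_KK_cutoff x y N Hx Hy HNy).
Qed.

Lemma K2_split (x y : R) (N : nat) : 0 < x -> 0 < y -> 1 <= INR N * y ->
  K2 x y = RInt (fun z => K x z * K z y) 0 (cutoff y N)
           + RInt (fun z => K x z * K z y) (cutoff y N) 1.
Proof.
  intros Hx Hy HN. pose proof (cutoff_range y N Hy HN). pose proof (ex_RInt_KK x y Hx Hy).
  unfold K2. symmetry. apply (RInt_Chasles (V := R_CompleteNormedModule)).
  - apply (ex_RInt_Chasles_1 (V := R_CompleteNormedModule) _ _ _ 1); [lra | assumption].
  - apply (ex_RInt_Chasles_2 (V := R_CompleteNormedModule) _ 0); [lra | assumption].
Qed.

Lemma RInt_KK_initial_bound (x y d : R) : 0 < x -> 0 < y -> 0 < d <= 1 ->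
  Rabs (RInt (fun z => K x z * K z y) 0 d) <= d / 4.
Proof.
  intros Hx Hy Hd. replace (d / 4) with ((d - 0) * (1/4)) by field.
  apply abs_RInt_le_const; [lra | | intros; apply KK_bound].
  apply (ex_RInt_Chasles_1 (V := R_CompleteNormedModule) _ _ _ 1);
    [lra | apply ex_RInt_KK; assumption].
Qed.

Lemma K2_cutoff_bound (x y : R) (N : nat) : 0 < x <= 1 -> 0 < y -> 1 <= INR N * y ->
  Rabs (K2 x y) <= cutoff y N / 3 + x / 12 + x / (2 * y^2) * Rabs (sum_n (tail_term x y) N)
                   + x^2 * bern3_sup / (3 * y).
Proof.
  intros Hx Hy HN. pose proof (cutoff_range y N Hy HN) as Hd.
  rewrite (K2_split x y N) by lra.
  pose proof (RInt_KK_initial_bound x y _ (proj1 Hx) Hy Hd).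
  pose proof (RInt_KK_cutoff_bound x y N (proj1 Hx) Hy HN).
  pose proof (Rabs_triang (RInt (fun z => K x z * K z y) 0 (cutoff y N))
                          (RInt (fun z => K x z * K z y) (cutoff y N) 1)).
  assert (x * cutoff y N ^ 2 <= cutoff y N) by nra.
  lra.
Qed.

(** * The tail sum *)

Definition inv_sq_above (t : R) (m : nat) : R := if Rlt_dec t (INR m) then / (INR m)^2 else 0.

Lemma sum_inv_sq_above_below (t : R) (N : nat) : INR N <= t -> sum_n (inv_sq_above t) N = 0.
Proof.
  induction N as [| N IH]; intros HN.
  - rewrite sum_O. unfold inv_sq_above. destruct (Rlt_dec _ _); [lra | reflexivity].
  - rewrite sum_Sn, IH by (rewrite S_INR in HN; lra).
    unfold inv_sq_above. destruct (Rlt_dec _ _); [lra |]. unfold plus; simpl. ring.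
Qed.

(* Telescoping with [1/m^2 <= 2/(2m-1) - 2/(2m+1)]. *)
Lemma sum_inv_sq_above_telescope (t : R) (N : nat) : 1 <= t ->
  sum_n (inv_sq_above t) N
  <= / t + / t^2 - (if Rlt_dec t (INR N) then 2 / (2 * INR N + 1) else 0).
Proof.
  intros Ht.
  assert (Hi : 0 < / t) by (apply Rinv_0_lt_compat; lra).
  assert (Hi2 : 0 < / t^2) by (apply Rinv_0_lt_compat; nra).
  induction N as [| N IH].
  - rewrite sum_O. unfold inv_sq_above. destruct (Rlt_dec t (INR 0)) as [h | h]; simpl in h; lra.
  - rewrite sum_Sn. change (plus ?a ?b) with (a + b). unfold inv_sq_above at 2.
    pose proof (pos_INR N) as HN. rewrite S_INR.
    destruct (Rlt_dec t (INR N + 1)) as [h | h];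
      destruct (Rlt_dec t (INR N)) as [h' | h'] in IH; [| | lra | lra].
    + assert (/ (INR N + 1)^2 <= 2 / (2 * INR N + 1) - 2 / (2 * (INR N + 1) + 1)); [| lra].
      replace (2 / (2 * INR N + 1) - 2 / (2 * (INR N + 1) + 1))
        with (4 / ((2 * INR N + 1) * (2 * INR N + 3))) by (field; lra).
      replace (/ (INR N + 1)^2) with (1 / (INR N + 1)^2) by (field; lra).
      apply Rdiv_le_cross; nra.
    + rewrite sum_inv_sq_above_below by lra.
      assert (/ (INR N + 1) <= / t) by (apply Rinv_le_contravar; lra).
      assert (/ (INR N + 1)^2 <= / t^2) by (apply Rinv_le_contravar; nra).
      assert (2 / (2 * (INR N + 1) + 1) <= / (INR N + 1)).
      { replace (/ (INR N + 1)) with (1 / (INR N + 1)) by (field; lra). apply Rdiv_le_cross; lra. }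
      lra.
Qed.

Lemma sum_inv_sq_above_le (t : R) (N : nat) : 1 <= t -> sum_n (inv_sq_above t) N <= / t + / t^2.
Proof.
  intros Ht. pose proof (sum_inv_sq_above_telescope t N Ht).
  destruct (Rlt_dec t (INR N)); [| lra].
  assert (0 <= 2 / (2 * INR N + 1)); [| lra].
  apply Rlt_le, Rdiv_lt_0_compat; [lra |]. pose proof (pos_INR N). lra.
Qed.

Lemma tail_term_abs_le (x y : R) (m : nat) : 0 < y ->
  Rabs (tail_term x y m) <= / 6 * inv_sq_above (/ y) m.
Proof.
  intros Hy. unfold tail_term, inv_sq_above.
  destruct (Rlt_dec _ _) as [h | h]; [| rewrite Rabs_R0; lra].
  assert (Hm : 0 < INR m ^ 2) by (pose proof (Rinv_0_lt_compat y Hy); nra).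
  unfold Rdiv. rewrite Rabs_mult, (Rabs_pos_eq (/ _)) by (left; apply Rinv_0_lt_compat; lra).
  apply Rmult_le_compat_r; [left; apply Rinv_0_lt_compat; lra |].
  pose proof (frac_range (INR m * y * / x)).
  replace (/ 6) with (1 / 6) by field. apply (bern2_bound (frac (INR m * y * / x))). lra.
Qed.

Lemma sum_abs_tail_term_le (x y : R) (N : nat) : 0 < y <= 1 ->
  sum_n (fun m => Rabs (tail_term x y m)) N <= (y + y^2) / 6.
Proof.
  intros Hy.
  apply Rle_trans with (sum_n (fun m => / 6 * inv_sq_above (/ y) m) N).
  { apply sum_n_m_le. intros m. apply tail_term_abs_le. lra. }
  assert (Hs : sum_n (fun m => / 6 * inv_sq_above (/ y) m) N = / 6 * sum_n (inv_sq_above (/ y)) N)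
    by exact (sum_n_mult_l (K := R_Ring) _ _ _).
  rewrite Hs.
  assert (Hy1 : 1 <= / y) by (rewrite <- Rinv_1; apply Rinv_le_contravar; lra).
  pose proof (sum_inv_sq_above_le (/ y) N Hy1) as H.
  rewrite Rinv_inv in H. replace (/ (/ y)^2) with (y^2) in H by (field; lra). lra.
Qed.

Lemma tail_partial_sum_bound (x y : R) (N : nat) : 0 < y <= 1 ->
  Rabs (sum_n (tail_term x y) N) <= (y + y^2) / 6.
Proof.
  intros Hy. eapply Rle_trans; [apply (norm_sum_n_m (K := R_AbsRing) (V := R_NormedModule)) |].
  exact (sum_abs_tail_term_le x y N Hy).
Qed.

Lemma ex_series_tail_term (x y : R) : 0 < y <= 1 -> ex_series (tail_term x y).
Proof.
  intros Hy. apply ex_series_Rabs.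
  destruct (ex_finite_lim_seq_incr (sum_n (fun m => Rabs (tail_term x y m))) ((y + y^2) / 6))
    as [l Hl].
  - intros n. rewrite sum_Sn. unfold plus; simpl. pose proof (Rabs_pos (tail_term x y (S n))). lra.
  - intros n. exact (sum_abs_tail_term_le x y n Hy).
  - exists l. exact Hl.
Qed.

(** * The three estimates *)

Lemma K2_div_bound (x y : R) : 0 < x <= 1 -> 0 < y <= 1 ->
  Rabs (K2 x y) / x
  <= 1/12 + x / ((36 * sqrt 3) * y) + / (2 * y^2) * Rabs (tail_sum x y).
Proof.
  intros Hx Hy. apply Rle_plus_epsilon. intros eps Heps.
  assert (HS : is_lim_seq (sum_n (tail_term x y)) (tail_sum x y))
    by exact (Series_correct _ (ex_series_tail_term x y Hy)).
  apply is_lim_seq_spec in HS.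
  assert (He : 0 < eps * y^2) by (apply Rmult_lt_0_compat; nra).
  assert (Hxe : 0 < x * eps) by nra.
  destruct (filter_and _ _ (HS (mkposreal _ He)) (eventually_cutoff_le y (x * eps) (proj1 Hy) Hxe))
    as [N HN].
  destruct (HN N (le_n N)) as [HSN [HNy Hcut]]. simpl in HSN.
  pose proof (K2_cutoff_bound x y N Hx (proj1 Hy) HNy) as HK.
  pose proof (Rabs_triang_inv (sum_n (tail_term x y) N) (tail_sum x y)).
  apply Rle_div_l; [lra |].
  replace (x / (36 * sqrt 3 * y)) with (x * (bern3_sup / 3) / y)
    by (rewrite bern3_sup_div3; field; pose proof one_lt_sqrt3; lra).
  assert (Hsum : x / (2 * y^2) * Rabs (sum_n (tail_term x y) N)
                 <= x * (/ (2 * y^2) * Rabs (tail_sum x y)) + x * eps / 2).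
  { replace (x * (/ (2 * y^2) * Rabs (tail_sum x y)) + x * eps / 2)
      with (x / (2 * y^2) * (Rabs (tail_sum x y) + eps * y^2)) by (field; lra).
    apply Rmult_le_compat_l; [apply Rlt_le, Rdiv_lt_0_compat; nra | lra]. }
  replace (x^2 * bern3_sup / (3 * y)) with (x * (x * (bern3_sup / 3) / y)) in HK by (field; lra).
  nra.
Qed.

Lemma K2_bound_of_le (x y : R) : 0 < x <= 1 -> 0 < y <= 1 -> x <= y ->
  Rabs (K2 x y) <= (1/4 + / (36 * sqrt 3)) * (x / y).
Proof.
  intros Hx Hy Hxy. apply Rle_plus_epsilon. intros eps Heps.
  destruct (eventually_cutoff_le y (3 * eps) (proj1 Hy) ltac:(lra)) as [N HN].
  destruct (HN N (le_n N)) as [HNy Hcut].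
  pose proof (K2_cutoff_bound x y N Hx (proj1 Hy) HNy) as HK.
  pose proof (tail_partial_sum_bound x y N Hy) as HT.
  rewrite <- bern3_sup_div3. pose proof bern3_sup_pos.
  assert (E1 : x / (2 * y^2) * Rabs (sum_n (tail_term x y) N) <= x / 12 + x / (12 * y)).
  { apply Rle_trans with (x / (2 * y^2) * ((y + y^2) / 6)).
    - apply Rmult_le_compat_l; [apply Rlt_le, Rdiv_lt_0_compat; nra | exact HT].
    - right. field. lra. }
  assert (E2 : x / 12 <= x / (12 * y)) by (apply Rdiv_le_cross; nra).
  assert (E3 : x^2 * bern3_sup / (3 * y) <= bern3_sup / 3 * (x / y)).
  { replace (x^2 * bern3_sup / (3 * y)) with (x * (bern3_sup / 3 * (x / y))) by (field; lra).
    assert (0 <= bern3_sup / 3 * (x / y))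
      by (apply Rmult_le_pos; [lra | apply Rlt_le, Rdiv_lt_0_compat; lra]).
    nra. }
  assert (E4 : x / (12 * y) = 1/12 * (x / y)) by (field; lra).
  lra.
Qed.

Lemma K2_sym (x y : R) : K2 x y = K2 y x.
Proof.
  unfold K2. apply RInt_ext. intros z _. rewrite (K_sym x z), (K_sym z y). apply Rmult_comm.
Qed.

Lemma K2_ratio_bound (x y : R) : 0 < x <= 1 -> 0 < y <= 1 ->
  Rabs (K2 x y) <= (1/4 + / (36 * sqrt 3)) * (Rmin x y / Rmax x y).
Proof.
  intros Hx Hy. destruct (Rle_dec x y) as [h | h].
  - rewrite Rmin_left, Rmax_right by lra. apply K2_bound_of_le; assumption.
  - rewrite Rmin_right, Rmax_left, K2_sym by lra. apply K2_bound_of_le; lra.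
Qed.

Lemma K2_diag_bound (x : R) : 0 < x <= 1 -> Rabs (K2 x x - 1/12) <= (1/6 + / (36 * sqrt 3)) * x.
Proof.
  intros Hx.
  destruct (eventually_cutoff_le x (x / 3) (proj1 Hx) ltac:(lra)) as [N HN].
  destruct (HN N (le_n N)) as [HNx Hcut].
  pose proof (cutoff_range x N (proj1 Hx) HNx) as Hd. set (d := cutoff x N) in *.
  destruct (RInt_bern2_frac_inv x d (proj1 Hx) Hd) as [Hex HP].
  (* on the diagonal [K(x,z)^2 = (1/2 - t)^2 = bern2 t + 1/12] *)
  assert (Htail : RInt (fun z => K x z * K z x) d 1
                  = (1 - d) * (1/12) + 1 * RInt (fun z => bern2 (frac (/ (x * z)))) d 1).
  { apply is_RInt_unique.
    refine (is_RInt_ext _ _ _ _ _ _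
              (is_RInt_add_scal _ _ _ _ _ _ 1 (is_RInt_const d 1 (1/12)) (RInt_correct _ _ _ Hex))).
    rewrite Rmin_left, Rmax_right by lra. intros z Hz. rewrite (K_sym z x), K_pos by lra.
    unfold bern2. simpl. field. }
  rewrite (K2_split x x N) by lra. fold d. rewrite Htail.
  pose proof (RInt_KK_initial_bound x x d (proj1 Hx) (proj1 Hx) Hd) as H0.
  pose proof bern3_sup_pos. pose proof one_lt_sqrt3.
  assert (bern3_sup <= 1/6).
  { unfold bern3_sup. replace (1/6) with (/ 6) by field. apply Rinv_le_contravar; lra. }
  rewrite <- bern3_sup_div3.
  apply Rabs_le_between in H0, HP. apply Rabs_le. nra.
Qed.

Theorem lemma2p4 :
  forall x y : R, 0 < x <= 1 -> 0 < y <= 1 ->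
    Rabs (K2 x y) / x
      <= 1/12 + x / ((36 * sqrt 3) * y) + / (2 * y^2) * Rabs (tail_sum x y)
    /\ Rabs (K2 x y) <= (1/4 + / (36 * sqrt 3)) * (Rmin x y / Rmax x y)
    /\ Rabs (K2 x x - 1/12) <= (1/6 + / (36 * sqrt 3)) * x.
Proof.
  intros x y Hx Hy.
  split; [| split].
  - exact (K2_div_bound x y Hx Hy).
  - exact (K2_ratio_bound x y Hx Hy).
  - exact (K2_diag_bound x Hx).
Qed.
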